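(* Let $\mathcal{K}$ be an arc in $\mathbb{P}^2(\mathbb{F}_q)$ and let $\mathcal{C}_1$ be an irreducible envelope of $\mathcal{K}$. Then (1) $\mathcal{C}_1$ is defined over $\mathbb{F}_q$; (2) if $q$ is odd and $\mathcal{K}$ is complete and not a conic, then the degree of $\mathcal{C}_1$ is at least three.
   Context: A $k$-arc is a set of $k$ points of $\mathbb{P}^2(\mathbb{F}_q)$ no three collinear; it is complete if not properly contained in another arc. Lines of $\mathbb{P}^2(\overline{\mathbb{F}}_q)$ are regarded as points of the dual plane. Segre associates to $\mathcal{K}$ its envelope $\mathcal{C}$, a plane algebraic curve of the dual plane defined over $\mathbb{F}_q$ (whose points include the unisecants, i.e. lines of $\mathbb{P}^2(\mathbb{F}_q)$ meeting $\mathcal{K}$ in exactly one point). For $q$ odd it has the property: $\mathcal{K}$ is incomplete iff $\mathcal{C}$ has a linear component defined over $\mathbb{F}_q$, and $\mathcal{K}$ is a conic iff it is complete and $\mathcal{C}$ has a quadratic component defined over $\mathbb{F}_q$. A non-singular point $P$ of a plane curve $\mathcal{A}$ is an inflexion point if $I(P,\mathcal{A}\cap\ell)>2$ for the tangent $\ell$ at $P$. A point $P_0\in\mathcal{C}$ is special if it is non-singular on $\mathcal{C}$, $\mathbb{F}_q$-rational and not an inflexion point of $\mathcal{C}$; the unique irreducible component of $\mathcal{C}$ containing a special point $P_0$ is the irreducible envelope associated to $P_0$, and an irreducible envelope of $\mathcal{K}$ is one associated to some special point. *)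

From HB Require Import structures.
From mathcomp Require Import all_boot all_order all_algebra all_field.
From mathcomp Require Import mpoly.
Set Implicit Arguments. Unset Strict Implicit. Unset Printing Implicit Defensive.
Import Order.TTheory GRing.Theory Num.Theory.
Local Open Scope ring_scope.

(* F is F_q (q = #|F|), L is an algebraic closure of F given by the embedding
   iota : F -> L (L algebraically closed and algebraic over iota(F)). *)
Definition is_alg_closure (F : finFieldType) (L : closedFieldType)
  (iota : {rmorphism F -> L}) : Prop :=
  forall x : L, exists p : {poly F}, p != 0 /\ root (map_poly iota p) x.

(* A point (or a line, via its coordinates) of P^2(F_q) is a nonzero
   vector of F^3, taken up to a nonzero scalar. *)
Definition dotF (F : fieldType) (u x : 'rV[F]_3) : F := \sum_(i < 3) u 0 i * x 0 i.

Definition proportional (F : fieldType) (x y : 'rV[F]_3) : Prop :=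
  exists c : F, c != 0 /\ y = c *: x.

Definition collinear3 (F : fieldType) (x y z : 'rV[F]_3) : Prop :=
  \det (col_mx x (col_mx y z) : 'M[F]_(1 + (1 + 1))) = 0.

(* A set of representatives K describes a set of points of P^2(F_q):
   all nonzero and pairwise non-proportional. *)
Definition proj_set (F : finFieldType) (K : {set 'rV[F]_3}) : Prop :=
  (forall x, x \in K -> x != 0) /\
  (forall x y, x \in K -> y \in K -> proportional x y -> x = y).

Definition is_arc (F : finFieldType) (K : {set 'rV[F]_3}) : Prop :=
  proj_set K /\
  (forall x y z, x \in K -> y \in K -> z \in K ->
     x != y -> y != z -> x != z -> ~ collinear3 x y z).

Definition proj_sub (F : finFieldType) (K K' : {set 'rV[F]_3}) : Prop :=
  forall x, x \in K -> exists2 y, y \in K' & proportional x y.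

Definition is_complete_arc (F : finFieldType) (K : {set 'rV[F]_3}) : Prop :=
  is_arc K /\
  ~ (exists K' : {set 'rV[F]_3}, is_arc K' /\ proj_sub K K' /\ ~ proj_sub K' K).

(* K is (the point set of) a non-degenerate conic: the F_q-rational points of
   Q(x) = x A x^T = 0 with Q non-singular over the algebraic closure
   (no point of the conic where the gradient x (A + A^T) vanishes). *)
Definition is_conic (F : finFieldType) (L : closedFieldType)
  (iota : {rmorphism F -> L}) (K : {set 'rV[F]_3}) : Prop :=
  exists A : 'M[F]_3,
    (forall x : 'rV[L]_3, x != 0 -> (x *m map_mx iota A *m x^T) 0 0 = 0 ->
        x *m (map_mx iota (A + A^T)) != 0) /\
    proj_sub K [set x : 'rV[F]_3 | (x != 0) && ((x *m A *m x^T) 0 0 == 0)] /\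
    proj_sub [set x : 'rV[F]_3 | (x != 0) && ((x *m A *m x^T) 0 0 == 0)] K.

Definition unisecant (F : finFieldType) (K : {set 'rV[F]_3}) (u : 'rV[F]_3) : Prop :=
  u != 0 /\ #|[set x in K | dotF u x == 0]| = 1%N.

(* A curve is given by a nonzero homogeneous polynomial of positive degree
   (equations are considered up to a nonzero scalar). *)
Definition curve_deg (L : fieldType) (C : {mpoly L[3]}) : nat := (msize C).-1.

Definition is_curve (L : fieldType) (C : {mpoly L[3]}) : Prop :=
  C != 0 /\ (0 < curve_deg C)%N /\ C \is (curve_deg C).-homog.

Definition embv (F : finFieldType) (L : closedFieldType)
  (iota : {rmorphism F -> L}) (u : 'rV[F]_3) : 'I_3 -> L :=
  fun i => iota (u 0 i).

Definition defined_over_Fq (F : finFieldType) (L : closedFieldType)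
  (iota : {rmorphism F -> L}) (C : {mpoly L[3]}) : Prop :=
  exists (D : {mpoly F[3]}) (c : L), c != 0 /\ C = c *: map_mpoly iota D.

Definition mpoly_const (L : fieldType) (p : {mpoly L[3]}) : Prop :=
  (msize p <= 1)%N.

Definition mpoly_irreducible (L : fieldType) (p : {mpoly L[3]}) : Prop :=
  ~ mpoly_const p /\
  forall f g : {mpoly L[3]}, p = f * g -> mpoly_const f \/ mpoly_const g.

Definition mdivides (L : fieldType) (p C : {mpoly L[3]}) : Prop :=
  exists r : {mpoly L[3]}, C = p * r.

Definition is_component (L : fieldType) (C1 C : {mpoly L[3]}) : Prop :=
  is_curve C1 /\ mpoly_irreducible C1 /\ mdivides C1 C.

Definition has_Fq_component (F : finFieldType) (L : closedFieldType)
  (iota : {rmorphism F -> L}) (d : nat) (C : {mpoly L[3]}) : Prop :=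
  exists D : {mpoly F[3]},
    is_component (map_mpoly iota D) C /\ curve_deg (map_mpoly iota D) = d.

Definition on_curve (L : fieldType) (C : {mpoly L[3]}) (v : 'I_3 -> L) : Prop :=
  (exists i, v i != 0) /\ C.@[v] = 0.

Definition nonsingular_pt (L : fieldType) (C : {mpoly L[3]}) (v : 'I_3 -> L) : Prop :=
  on_curve C v /\ exists i : 'I_3, (mderiv i C).@[v] != 0.

Definition restr_line (L : fieldType) (C : {mpoly L[3]}) (v w : 'I_3 -> L) : {poly L} :=
  mmap (fun a => a%:P) (fun i => (v i)%:P + 'X * (w i)%:P) C.

(* inflexion point: non-singular point v such that the tangent line l at v
   satisfies I(v, C \cap l) > 2, i.e. C restricted to l (parametrized from v)
   vanishes to order >= 3 at v (or identically). *)
Definition inflexion_pt (L : fieldType) (C : {mpoly L[3]}) (v : 'I_3 -> L) : Prop :=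
  nonsingular_pt C v /\
  exists w : 'I_3 -> L,
    (~ exists c : L, forall i, w i = c * v i) /\
    \sum_(i < 3) (mderiv i C).@[v] * w i = 0 /\
    ('X^3 %| restr_line C v w)%R.

Definition special_pt (F : finFieldType) (L : closedFieldType)
  (iota : {rmorphism F -> L}) (C : {mpoly L[3]}) (u : 'rV[F]_3) : Prop :=
  u != 0 /\ nonsingular_pt C (embv iota u) /\ ~ inflexion_pt C (embv iota u).

Definition irreducible_envelope (F : finFieldType) (L : closedFieldType)
  (iota : {rmorphism F -> L}) (C C1 : {mpoly L[3]}) : Prop :=
  exists u : 'rV[F]_3, special_pt iota C u /\
    is_component C1 C /\ C1.@[embv iota u] = 0.

(* The properties of Segre's envelope C of the arc K used in the paper. *)
Definition segre_envelope (F : finFieldType) (L : closedFieldType)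
  (iota : {rmorphism F -> L}) (K : {set 'rV[F]_3}) (C : {mpoly L[3]}) : Prop :=
  is_curve C /\ defined_over_Fq iota C /\
  (forall u, unisecant K u -> C.@[embv iota u] = 0) /\
  (odd #|F| ->
     ((~ is_complete_arc K) <-> has_Fq_component iota 1 C) /\
     (is_conic iota K <-> (is_complete_arc K /\ has_Fq_component iota 2 C))).

(* Let sigma be the Frobenius x |-> x^q of L, acting on coefficients. As C is
   defined over F_q, sigma(C) is a scalar multiple of C, so the irreducible
   factor C1 of C = C1 r divides sigma(C1) sigma(r). Irreducible polynomials in
   L[X,Y,Z] are prime (Gauss's lemma and induction on the number of variables),
   hence C1 divides sigma(C1) or sigma(r). In the second case r vanishes at the
   F_q-rational point P0, which would then be singular on C; in the first case
   sigma(C1) is a scalar multiple of C1, and since the fixed field of sigma is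
   F_q, C1 is defined over F_q. For (2), a component of degree one or two
   defined over F_q would make K incomplete, respectively a conic, by the
   defining properties of Segre's envelope. *)

From HB Require Import structures.
From mathcomp Require Import all_boot all_order all_algebra all_field.
From mathcomp Require Import mpoly.
From mathcomp Require Import zify ring.
From Stdlib Require Import Classical.
Set Implicit Arguments. Unset Strict Implicit. Unset Printing Implicit Defensive.
Import Order.TTheory GRing.Theory Num.Theory.
Local Open Scope ring_scope.

Lemma classic_ex_minn (P : nat -> Prop) :
  (exists n, P n) -> exists n, P n /\ forall m, P m -> (n <= m)%N.
Proof.
move=> [n Pn]; elim/ltn_ind: n Pn => n IHn Pn.
have [[m [Pm ltmn]] | noPlt] := classic (exists m, P m /\ (m < n)%N).
  exact: IHn Pm.
exists n; split=> // m Pm; rewrite leqNgt; apply/negP => ltmn.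
by apply: noPlt; exists m.
Qed.

Section RingDivisibility.
Variable R : comUnitRingType.
Implicit Types a b c p x y : R.

Definition rdvd a b : Prop := exists c, b = a * c.

Definition rprime p : Prop :=
  [/\ p != 0, p \isn't a GRing.unit &
      forall a b, rdvd p (a * b) -> rdvd p a \/ rdvd p b].

Definition rirreducible p : Prop :=
  [/\ p != 0, p \isn't a GRing.unit &
      forall a b, p = a * b -> a \is a GRing.unit \/ b \is a GRing.unit].

Definition factorial_ring : Prop :=
  forall c, c != 0 -> exists u s,
    [/\ u \is a GRing.unit, forall x, x \in s -> rprime x & c = u * \prod_(x <- s) x].

Definition irreducible_prime_ring : Prop := forall p, rirreducible p -> rprime p.

Lemma rdvd0 a : rdvd a 0. Proof. by exists 0; rewrite mulr0. Qed.

Lemma rdvdD a x y : rdvd a x -> rdvd a y -> rdvd a (x + y).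
Proof. by move=> [c ->] [d ->]; exists (c + d); rewrite mulrDr. Qed.

Lemma rdvdB a x y : rdvd a x -> rdvd a y -> rdvd a (x - y).
Proof. by move=> [c ->] [d ->]; exists (c - d); rewrite mulrBr. Qed.

Lemma rdvdMr a x y : rdvd a x -> rdvd a (x * y).
Proof. by move=> [c ->]; exists (c * y); rewrite mulrA. Qed.

Lemma rdvdMl a x y : rdvd a y -> rdvd a (x * y).
Proof. by rewrite mulrC; apply: rdvdMr. Qed.

Lemma rdvd_sum a (I : Type) (r : seq I) (P : pred I) (F : I -> R) :
  (forall i, P i -> rdvd a (F i)) -> rdvd a (\sum_(i <- r | P i) F i).
Proof.
move=> dvdF; elim/big_rec: _ => [|i s Pi dvds]; first exact: rdvd0.
exact: rdvdD (dvdF i Pi) dvds.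
Qed.

Lemma rprimeMl v p : v \is a GRing.unit -> rprime p -> rprime (v * p).
Proof.
move=> vU [p0 pU pP]; split.
- by apply: contra_neq p0 => vp0; rewrite -(mulKr vU p) vp0 mulr0.
- by rewrite unitrM vU.
move=> a b [c e]; have [[d ->]|[d ->]] : rdvd p a \/ rdvd p b.
- by apply: pP; exists (v * c); rewrite e mulrCA mulrA.
- by left; exists (v^-1 * d); rewrite -mulrA (mulrCA p) mulVKr.
- by right; exists (v^-1 * d); rewrite -mulrA (mulrCA p) mulVKr.
Qed.

Lemma factorial_irreducible_prime : factorial_ring -> irreducible_prime_ring.
Proof.
move=> fR g [g0 gU gI]; have [u [s [uU sP eg]]] := fR g g0.
case: s sP eg => [|x s] sP eg; first by move: gU; rewrite eg big_nil mulr1 uU.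
have xP := sP x (mem_head x s); have [_ xU _] := xP.
rewrite big_cons mulrA in eg; have [uxU|sU] := gI _ _ eg.
  by move: uxU; rewrite unitrM (negbTE xU) andbF.
rewrite eg mulrAC; apply: rprimeMl => //; by rewrite unitrM uU.
Qed.

End RingDivisibility.

Lemma irreducible_prime_ring_iso (R S : comUnitRingType)
    (f : {rmorphism S -> R}) (g : R -> S) :
  cancel f g -> cancel g f -> irreducible_prime_ring R -> irreducible_prime_ring S.
Proof.
move=> fK gK Rprime p [p0 pU pI].
have f_inj := can_inj fK.
have gM a b : g (a * b) = g a * g b by apply: f_inj; rewrite rmorphM !gK.
have fU a : (f a \is a GRing.unit) = (a \is a GRing.unit).
  apply/idP/idP => [/unitrPr [b fab1]|]; last exact: rmorph_unit.
  by apply/unitrPr; exists (g b); rewrite -[a]fK -gM fab1 -(rmorph1 f) fK.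
have [_ _ fpP] : rprime (f p).
  apply: Rprime; split; rewrite ?fU //.
    by apply: contra_neq p0 => fp0; apply: f_inj; rewrite fp0 rmorph0.
  by move=> a b fpab; rewrite -[a]gK -[b]gK !fU; apply: pI; rewrite -gM -fpab fK.
split=> // a b [c eab].
have [[d ed]|[d ed]] : rdvd (f p) (f a) \/ rdvd (f p) (f b).
- by apply: fpP; exists (f c); rewrite -!rmorphM eab.
- by left; exists (g d); apply: f_inj; rewrite rmorphM gK.
- by right; exists (g d); apply: f_inj; rewrite rmorphM gK.
Qed.

Section IdomainDivisibility.
Variable R : idomainType.
Implicit Types G A p : R.

Lemma rprime_dvd_cancel p G A :
  rprime p -> ~ rdvd p G -> rdvd G (p * A) -> rdvd G A.
Proof.
move=> [p0 _ pP] pNG [T eT].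
have [//|[T1 eT1]] : rdvd p G \/ rdvd p T by apply: pP; exists A.
by exists T1; apply: (mulfI p0); rewrite eT eT1 mulrCA.
Qed.

Lemma rprimes_dvd_cancel (s : seq R) G A :
  (forall x, x \in s -> rprime x /\ ~ rdvd x G) ->
  rdvd G ((\prod_(x <- s) x) * A) -> rdvd G A.
Proof.
elim: s => [|x s IHs] sP; first by rewrite big_nil mul1r.
have [xP xNG] := sP x (mem_head x s).
rewrite big_cons -mulrA => /(rprime_dvd_cancel xP xNG); apply: IHs.
by move=> y ys; apply: sP; rewrite inE ys orbT.
Qed.

End IdomainDivisibility.

Section GaussLemma.
Variable R : idomainType.
Implicit Types (c p : R) (A B G H Q : {poly R}).

Lemma rdvd_polyC p A : rdvd p%:P A <-> forall i, rdvd p A`_i.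
Proof.
split=> [[Q ->] i|dvdA]; first by exists Q`_i; rewrite coefCM.
have dvdA' i : exists x, A`_i == p * x by have [x ->] := dvdA i; exists x.
exists (\poly_(i < size A) xchoose (dvdA' i)); apply/polyP => i.
rewrite coefCM coef_poly; case: ltnP => [_|le]; last by rewrite mulr0 nth_default.
exact/eqP/(xchooseP (dvdA' i)).
Qed.

Lemma polyC_unitE p : (p%:P \is a GRing.unit) = (p \is a GRing.unit).
Proof.
rewrite poly_unitE coefC /= size_polyC.
by case: (eqVneq p 0) => [->|]; rewrite ?unitr0 ?andbF.
Qed.

Lemma polyC_rprime p : rprime p -> rprime p%:P.
Proof.
move=> [p0 pU pP]; split; rewrite ?polyC_eq0 ?polyC_unitE //.
move=> A B dvdAB; apply: NNPP => /not_or_and [].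
rewrite !rdvd_polyC => /not_all_ex_not/classic_ex_minn [i [NdvdAi minA]].
move=> /not_all_ex_not/classic_ex_minn [j [NdvdBj minB]].
have dvdA k : (k < i)%N -> rdvd p A`_k.
  by move=> ltki; apply: NNPP => /minA; rewrite leqNgt ltki.
have dvdB k : (k < j)%N -> rdvd p B`_k.
  by move=> ltkj; apply: NNPP => /minB; rewrite leqNgt ltkj.
have lti : (i < (i + j).+1)%N by rewrite ltnS leq_addr.
suff /pP [/NdvdAi [] | /NdvdBj []] : rdvd p (A`_i * B`_j).
have -> : A`_i * B`_j = (A * B)`_(i + j) -
    \sum_(k < (i + j).+1 | k != Ordinal lti) A`_k * B`_(i + j - k).
  by rewrite coefM (bigD1 (Ordinal lti)) //= addKn addrK.
apply: rdvdB; first exact: (iffLR (rdvd_polyC _ _) dvdAB).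
apply: rdvd_sum => k neki; have : (k : nat) != i.
  by apply: contra neki => /eqP eki; apply/eqP/val_inj.
rewrite neq_ltn => /orP [ltki|ltik]; first exact/rdvdMr/dvdA.
by apply/rdvdMl/dvdB; have := ltn_ord k; lia.
Qed.

Lemma Gauss_factor_primes (s : seq R) G Q H :
  (forall x, x \in s -> rprime x) -> (\prod_(x <- s) x)%:P * G = Q * H ->
  exists b Q' H', [/\ b != 0, H = b%:P * H' & G = Q' * H'].
Proof.
elim: s Q H => [|x s IHs] Q H sP.
  by rewrite big_nil mul1r => ->; exists 1, Q, H; rewrite mul1r oner_neq0.
have xP := sP x (mem_head x s); have [x0 _ _] := xP; have [xC0 _ xCP] := polyC_rprime xP.
have {}sP y : y \in s -> rprime y by move=> ys; apply: sP; rewrite inE ys orbT.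
rewrite big_cons polyCM -mulrA => eG.
have [[Q1 eQ]|[H1 eH]] : rdvd x%:P Q \/ rdvd x%:P H.
- by apply: xCP; rewrite -eG; exists ((\prod_(y <- s) y)%:P * G).
- by apply: (IHs Q1 H sP); apply: (mulfI xC0); rewrite eG eQ mulrA.
have eG1 : (\prod_(y <- s) y)%:P * G = Q * H1.
  by apply: (mulfI xC0); rewrite eG eH mulrCA.
have [b [Q' [H' [b0 eH1 ->]]]] := IHs Q H1 sP eG1.
by exists (x * b), Q', H'; rewrite mulf_neq0 // eH eH1 polyCM mulrA.
Qed.

Lemma poly_ideal_pseudo_principal (I : {poly R} -> Prop) :
  (forall P Q, I P -> I Q -> I (P - Q)) -> (forall P Q, I P -> I (Q * P)) ->
  (exists2 P, I P & P != 0) ->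
  exists H, [/\ H != 0, I H &
    forall P, I P -> exists c Q, c != 0 /\ c%:P * P = Q * H].
Proof.
move=> IB IM [P IP P0].
have /classic_ex_minn [n [[H [IH H0 <-]] minH]] :
  exists n, exists H, [/\ I H, H != 0 & size H = n] by exists (size P), P.
exists H; split=> // {P IP P0} P IP.
have := Pdiv.Idomain.divp_eq P H.
set c := _ ^+ _; set Q := _ %/ _; set Rm := _ %% _ => eP.
exists c, Q; split; first by rewrite expf_neq0 // lead_coef_eq0.
suff Rm0 : Rm = 0 by rewrite mul_polyC eP Rm0 addr0.
apply/eqP; apply: contraT => Rm0; have : (size H <= size Rm)%N.
  apply: minH; exists Rm; split=> //.
  have -> : Rm = c%:P * P - Q * H by rewrite mul_polyC eP addrAC subrr add0r.
  exact/IB/IM/IH/IM.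
by rewrite leqNgt Pdiv.Idomain.ltn_modp H0.
Qed.

Hypothesis R_factorial : factorial_ring R.

Lemma Gauss_factor c G Q H : c != 0 -> c%:P * G = Q * H ->
  exists b Q' H', [/\ b != 0, H = b%:P * H' & G = Q' * H'].
Proof.
move=> c0 eG; have [u [s [uU sP ec]]] := R_factorial c0.
apply: (Gauss_factor_primes (Q := (u^-1)%:P * Q) sP).
by rewrite -mulrA -eG mulrA -polyCM ec mulKr.
Qed.

Lemma rdvd_mul_polyC_cancel c G A :
  (forall p, rprime p -> ~ rdvd p%:P G) -> c != 0 ->
  rdvd G (c%:P * A) -> rdvd G A.
Proof.
move=> Gprimitive c0; have [u [s [uU sP ->]]] := R_factorial c0.
have -> : (u * \prod_(x <- s) x)%:P * A =
    (\prod_(y <- map polyC s) y) * (u%:P * A).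
  by rewrite polyCM rmorph_prod big_map -mulrA mulrCA.
move/rprimes_dvd_cancel => dvdGuA.
have /(rdvdMl (u^-1)%:P) : rdvd G (u%:P * A).
  apply: dvdGuA => _ /mapP [x xs ->]; split; first exact/polyC_rprime/sP.
  exact/Gprimitive/sP.
by rewrite mulrA -polyCM mulVr // mul1r.
Qed.

Lemma poly_nonconst_irreducible_prime G :
  rirreducible G -> (1 < size G)%N -> rprime G.
Proof.
move=> [G0 GU Girr] sG; split=> // A B dvdGAB.
have Gprimitive p : rprime p -> ~ rdvd p%:P G.
  move=> [p0 pU _] [T eT]; have [|] := Girr _ _ eT.
    by rewrite polyC_unitE (negbTE pU).
  rewrite poly_unitE => /andP [/eqP sT _].
  by move: sG; rewrite eT size_Cmul // sT.
pose I P := rdvd G (P * B).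
have [H [H0 IH Hgen]] : exists H, [/\ H != 0, I H &
    forall P, I P -> exists c Q, c != 0 /\ c%:P * P = Q * H].
  apply: poly_ideal_pseudo_principal => [P Q IP IQ|P Q IP|].
  - by rewrite /I mulrBl; apply: rdvdB.
  - by rewrite /I -mulrA; apply: rdvdMl.
  - by exists G => //; exists B.
have [c [Q [c0 /(Gauss_factor c0) [b [Q' [H' [b0 eH eG]]]]]]] :=
  Hgen G (ex_intro _ B erefl).
(* H pseudo-generates the ideal {P | G divides P B}; G = Q' H' with H' a
   constant multiple of H, so G divides A if Q' is a unit and B if H' is. *)
have [Q'U|H'U] := Girr _ _ eG.
  left; have [c' [Q'' [c'0 eA]]] := Hgen A dvdGAB.
  apply: (rdvd_mul_polyC_cancel Gprimitive c'0); exists (Q'' * b%:P * Q'^-1).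
  have eH' : H' = Q'^-1 * G by rewrite eG mulKr.
  by rewrite eA eH eH'; ring.
right; have : rdvd G (b%:P * (H' * B)) by rewrite mulrA -eH.
by move/(rdvd_mul_polyC_cancel Gprimitive b0)/(rdvdMl H'^-1); rewrite mulKr.
Qed.

Lemma poly_irreducible_prime : irreducible_prime_ring {poly R}.
Proof.
move=> G irrG; have [/size1_polyC eG|] := leqP (size G) 1; last first.
  exact: poly_nonconst_irreducible_prime.
have [G0 GU Girr] := irrG.
rewrite eG; apply/polyC_rprime/(factorial_irreducible_prime R_factorial).
split; first by rewrite -polyC_eq0 -eG.
  by rewrite -polyC_unitE -eG.
by move=> a b eab; rewrite -!polyC_unitE; apply: Girr; rewrite eG eab polyCM.
Qed.

End GaussLemma.

Section MPolyFactorization.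
Variable L : fieldType.

Lemma munit_msize n (p : {mpoly L[n]}) :
  (p \is a GRing.unit) = (msize p == 1%N).
Proof.
have -> : (p \is a GRing.unit) = (p == (p@_0)%:MP) && (p@_0 \is a GRing.unit).
  by [].
apply/idP/msize_poly1P => [/andP [/eqP ep p0U]|[c c0 ->]].
  by exists p@_0; rewrite -?unitfE.
by rewrite mcoeffC eqxx mulr1 eqxx unitfE.
Qed.

Lemma mpoly_reducible_split n (c : {mpoly L[n]}) :
  c != 0 -> c \isn't a GRing.unit -> ~ rirreducible c ->
  exists a b, [/\ c = a * b, (msize a < msize c)%N & (msize b < msize c)%N].
Proof.
move=> c0 cU Nirr.
have : ~ forall a b : {mpoly L[n]},
    c = a * b -> a \is a GRing.unit \/ b \is a GRing.unit.
  by move=> irr; apply: Nirr; split.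
move=> /not_all_ex_not [a] /not_all_ex_not [b] Nab.
have [eab /not_or_and [/negP aU /negP bU]] := imply_to_and _ _ Nab.
have a0 : a != 0 by apply: contra_neq c0; rewrite eab => ->; rewrite mul0r.
have b0 : b != 0 by apply: contra_neq c0; rewrite eab => ->; rewrite mulr0.
have msize_gt1 (x : {mpoly L[n]}) :
    x != 0 -> x \isn't a GRing.unit -> (1 < msize x)%N.
  by rewrite -msize_poly_eq0 munit_msize; case: (msize x) => [|[|]].
have := msizeM a0 b0; rewrite -eab => sc.
have sa := msize_gt1 _ a0 aU; have sb := msize_gt1 _ b0 bU.
have ltS (x y : nat) : (1 < y)%N -> (x < (x + y).-1)%N by move=> ?; lia.
by exists a, b; rewrite sc; split=> //; [apply: ltS | rewrite addnC; apply: ltS].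
Qed.

Lemma mpoly_factorial n :
  irreducible_prime_ring {mpoly L[n]} -> factorial_ring {mpoly L[n]}.
Proof.
move=> irrP c; have [k] := ubnP (msize c); elim: k c => // k IHk c ltck c0.
have [cU|cU] := boolP (c \is a GRing.unit).
  by exists c, [::]; rewrite big_nil mulr1.
have [cirr|cred] := classic (rirreducible c).
  exists 1, [:: c]; rewrite unitr1 big_seq1 mul1r; split=> // x.
  by rewrite inE => /eqP ->; apply: irrP.
have [a [b [eab lta ltb]]] := mpoly_reducible_split c0 cU cred.
have /norP [a0 b0] : ~~ ((a == 0) || (b == 0)) by rewrite -mulf_eq0 -eab.
have [ua [sa [uaU saP ea]]] := IHk a (leq_trans lta ltck) a0.
have [ub [sb [ubU sbP eb]]] := IHk b (leq_trans ltb ltck) b0.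
exists (ua * ub), (sa ++ sb); split; first by rewrite unitrM uaU ubU.
  by move=> x; rewrite mem_cat => /orP [/saP|/sbP].
by rewrite big_cat eab ea eb mulrACA.
Qed.

End MPolyFactorization.

Lemma poly_rmorph_ext (R S : nzRingType) (f g : {rmorphism {poly R} -> S}) :
  (forall c, f c%:P = g c%:P) -> f 'X = g 'X -> f =1 g.
Proof.
move=> eqC eqX p; rewrite -(coefK p) poly_def !rmorph_sum; apply: eq_bigr => i _.
by rewrite -mul_polyC !rmorphM eqC !rmorphXn eqX.
Qed.

Lemma mpoly_rmorph_ext n (R : comNzRingType) (S : nzRingType)
    (f g : {rmorphism {mpoly R[n]} -> S}) :
  (forall c, f c%:MP = g c%:MP) -> (forall i, f 'X_i = g 'X_i) -> f =1 g.
Proof.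
move=> eqC eqX p; rewrite (mpolyE p) !rmorph_sum; apply: eq_bigr => m _.
rewrite -mul_mpolyC !rmorphM eqC mpolyXE_id !rmorph_prod; congr (_ * _).
by apply: eq_bigr => i _; rewrite !rmorphXn eqX.
Qed.

Section MPolyUnivariate.
Variables (R : comNzRingType) (n : nat).

Local Notation widen := (widen_ord (leqnSn n)).

Lemma muniX_widen (j : 'I_n) :
  muni ('X_(widen j) : {mpoly R[n.+1]}) = ('X_j)%:P.
Proof.
rewrite /muni mmapX mmap1U; case: splitP => [k /= ejk|k /= ejk].
  by congr ('X__)%:P; apply/val_inj; rewrite /= -ejk.
by move: (ltn_ord j); rewrite ejk; lia.
Qed.

Lemma muniX_max : muni ('X_ord_max : {mpoly R[n.+1]}) = 'X.
Proof.
rewrite /muni mmapX mmap1U; case: splitP => [k /= ek|//].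
by move: (ltn_ord k); rewrite -ek; lia.
Qed.

Lemma mmultiE (q : {poly {mpoly R[n]}}) :
  mmulti q = (map_poly (@mwiden n R) q).['X_ord_max].
Proof.
rewrite horner_coef size_map_inj_poly ?mwiden0 //; last exact: inj_mwiden.
by apply: eq_bigr => i _; rewrite coef_map.
Qed.

Lemma mwidenXU (j : 'I_n) : mwiden ('X_j : {mpoly R[n]}) = 'X_(widen j).
Proof. by rewrite mwidenX mnmwiden1. Qed.

Lemma mmultiK : cancel (@muni n R) (@mmulti n R).
Proof.
move=> p; rewrite mmultiE; have := @mpoly_rmorph_ext n.+1 _ _
  (horner_eval 'X_ord_max \o map_poly (@mwiden n R) \o (@muni n R)) idfun.
apply => [c|i] /=.
  by rewrite muniC map_polyC /horner_eval hornerC; exact: mwidenC.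
have [j ->|->] := unliftP ord_max i.
  have -> : lift ord_max j = widen j.
    by apply/val_inj; rewrite /= /bump leqNgt ltn_ord.
  by rewrite muniX_widen map_polyC /horner_eval hornerC; exact: mwidenXU.
by rewrite muniX_max map_polyX /horner_eval hornerX.
Qed.

Lemma muniK : cancel (@mmulti n R) (@muni n R).
Proof.
have muni_mwiden : (@muni n R) \o (@mwiden n R) =1 polyC.
  apply: mpoly_rmorph_ext => [c|i] /=; first by rewrite mwidenC muniC.
  by rewrite mwidenXU muniX_widen.
move=> q; rewrite mmultiE; have := @poly_rmorph_ext _ _
  ((@muni n R) \o horner_eval 'X_ord_max \o map_poly (@mwiden n R)) idfun.
apply => [c|] /=.
  by rewrite map_polyC /horner_eval hornerC; exact: muni_mwiden.
by rewrite map_polyX /horner_eval hornerX muniX_max.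
Qed.

End MPolyUnivariate.

Lemma mpoly_irreducible_prime (L : fieldType) n :
  irreducible_prime_ring {mpoly L[n]}.
Proof.
elim: n => [|n IHn].
  move=> G [G0 GU _]; case/negP: GU; rewrite munit_msize; apply/msize_poly1P.
  exists G@_0; last exact: nvar0_mpolyC.
  by apply: contra_neq G0 => G00; rewrite [G]nvar0_mpolyC G00.
apply: (irreducible_prime_ring_iso (@mmultiK _ n) (@muniK _ n)).
exact/poly_irreducible_prime/mpoly_factorial.
Qed.

Section MapMPoly.
Variables (R S : comNzRingType) (f : {rmorphism R -> S}) (n : nat).

Lemma meval_map_mpoly (v : 'I_n -> R) (p : {mpoly R[n]}) :
  (map_mpoly f p).@[f \o v] = f p.@[v].
Proof.
have := @mpoly_rmorph_ext n _ _ (meval (f \o v) \o map_mpoly f) (f \o meval v).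
apply => [c|i] /=; first by rewrite map_mpolyC !mevalC.
by rewrite (map_mpolyX f U_(i)) !mevalXU.
Qed.

Lemma msize_map_mpoly (p : {mpoly R[n]}) :
  injective f -> msize (map_mpoly f p) = msize p.
Proof. by move=> f_inj; rewrite !msizeE (perm_big _ (msupp_map_mpoly _ f_inj)). Qed.

Lemma map_mpoly_coef_image (Q : {mpoly S[n]}) :
  (forall m, exists a, Q@_m = f a) -> exists D, Q = map_mpoly f D.
Proof.
move=> Qim; have pre m : exists a, f a == Q@_m by have [a ->] := Qim m; exists a.
exists (\sum_(m <- msupp Q) xchoose (pre m) *: 'X_[m]).
rewrite raddf_sum {1}(mpolyE Q); apply: eq_bigr => m _.
by rewrite /= map_mpolyZ map_mpolyX (eqP (xchooseP (pre m))).
Qed.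

End MapMPoly.

Lemma dvd_msize_eq_scale (L : fieldType) n (P Q w : {mpoly L[n]}) :
  P != 0 -> Q = P * w -> msize Q = msize P -> exists t, Q = t *: P.
Proof.
move=> P0 eQ sQ; have w0 : w != 0.
  by apply: contraTneq P0 => w0; rewrite -msize_poly_eq0 -sQ eQ w0 mulr0 msize0.
have /msize_poly1P [t _ ew] : msize w == 1%N.
  rewrite eQ msizeM // in sQ; apply/eqP; move: sQ P0 w0.
  by rewrite -!msize_poly_eq0; move: (msize P) (msize w) => a b; lia.
by exists t; rewrite eQ ew mulrC mul_mpolyC.
Qed.

Section QFrobenius.
Variables (L : fieldType) (q : nat).

(* As in [pFrobenius_aut], the otherwise unused proof argument carries the
   characteristic hypothesis needed by the morphism instances. *)
Definition qFrobenius of [pchar L].-nat q := fun x : L => x ^+ q.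

Hypothesis qP : [pchar L].-nat q.

Fact qFrobenius_is_nmod_morphism : nmod_morphism (qFrobenius qP).
Proof.
split=> [|x y]; last exact: exprDn_pchar.
by rewrite /qFrobenius expr0n; case/andP: qP; case: q.
Qed.

Fact qFrobenius_is_monoid_morphism : monoid_morphism (qFrobenius qP).
Proof. by split=> [|x y]; rewrite /qFrobenius ?expr1n ?exprMn. Qed.

HB.instance Definition _ :=
  GRing.isNmodMorphism.Build L L (qFrobenius qP) qFrobenius_is_nmod_morphism.
HB.instance Definition _ :=
  GRing.isMonoidMorphism.Build L L (qFrobenius qP) qFrobenius_is_monoid_morphism.

End QFrobenius.

Section FiniteFieldFrobenius.
Variables (F : finFieldType) (L : fieldType) (iota : {rmorphism F -> L}).

Lemma pchar_nat_card : [pchar L].-nat #|F|.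
Proof.
have [p p_pr pF] := finPcharP F.
rewrite (card_pprimeChar pF) pnatX pnatE //.
by rewrite (rmorph_pchar iota pF).
Qed.

Local Notation frob := (qFrobenius pchar_nat_card).

Lemma frob_iota a : frob (iota a) = iota a.
Proof. by rewrite /qFrobenius -rmorphXn expf_card. Qed.

Lemma frob_fixed x : frob x = x -> exists a, x = iota a.
Proof.
move=> fx; have {}fx : x ^+ #|F| = x := fx.
have := congr1 (fun P => (map_poly iota P).[x]) (finField_genPoly F).
rewrite /= rmorphB /= map_polyXn map_polyX !hornerE fx subrr.
rewrite rmorph_prod horner_prod => /esym/eqP/prodf_eq0 [a _].
by rewrite /= map_polyXsubC hornerXsubC subr_eq0 => /eqP ->; exists a.
Qed.

Lemma map_mpoly_frob_iota n (D : {mpoly F[n]}) :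
  map_mpoly frob (map_mpoly iota D) = map_mpoly iota D.
Proof. by apply/mpolyP => m; rewrite !mcoeff_map_mpoly; exact: frob_iota. Qed.

Lemma frob_descent n (P : {mpoly L[n]}) t :
  P != 0 -> map_mpoly frob P = t *: P ->
  exists D c, c != 0 /\ P = c *: map_mpoly iota D.
Proof.
move=> P0 eP; have [m mP] : exists m, m \in msupp P.
  case eS: (msupp P) => [|m s]; last by exists m; rewrite inE eqxx.
  by move: P0; rewrite -msupp_eq0 eS.
set a := P@_m; have a0 : a != 0 by rewrite -mcoeff_msupp.
have ea : frob a = t * a by rewrite -mcoeff_map_mpoly eP mcoeffZ.
have t0 : t != 0.
  apply: contra_neq a0 => t0; apply/eqP.
  by rewrite -(fmorph_eq0 frob) /= ea t0 mul0r.
have [D eD] : exists D, a^-1 *: P = map_mpoly iota D.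
  apply: map_mpoly_coef_image => k; apply: frob_fixed.
  rewrite mcoeffZ rmorphM fmorphV /= ea -mcoeff_map_mpoly eP mcoeffZ.
  by rewrite invfM mulrACA mulVf ?mul1r.
by exists D, a; rewrite -eD scalerA divff // scale1r.
Qed.

Lemma frob_stable_prime_factor n (C C1 r : {mpoly L[n]}) (v : 'I_n -> L) k :
  rprime C1 -> C = C1 * r -> map_mpoly frob C = k *: C ->
  (forall i, frob (v i) = v i) -> C1.@[v] = 0 ->
  (exists i, (mderiv i C).@[v] != 0) ->
  exists t, map_mpoly frob C1 = t *: C1.
Proof.
move=> [C10 _ C1P] eC eS vfix C1v [i dCv].
have [[w ew]|[w ew]] : rdvd C1 (map_mpoly frob C1) \/ rdvd C1 (map_mpoly frob r).
- by apply: C1P; exists (k *: r); rewrite -rmorphM -eC /= eS eC scalerAr.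
- by apply: dvd_msize_eq_scale C10 ew _; apply: msize_map_mpoly; apply: fmorph_inj.
have rv : r.@[v] = 0.
  apply: (fmorph_inj frob); rewrite rmorph0 -meval_map_mpoly (meval_eq _ vfix).
  by rewrite ew mevalM C1v mul0r.
by move: dCv; rewrite eC mderivM mevalD !mevalM C1v rv mulr0 mul0r addr0 eqxx.
Qed.

End FiniteFieldFrobenius.

Lemma rirreducible_mpoly (L : fieldType) (p : {mpoly L[3]}) :
  mpoly_irreducible p -> rirreducible p.
Proof.
move=> [pNconst pI]; have unit_const (x : {mpoly L[3]}) :
    x != 0 -> mpoly_const x -> x \is a GRing.unit.
  by rewrite munit_msize -msize_poly_eq0 /mpoly_const; case: (msize x) => [|[|]].
have p0 : p != 0.
  by apply/eqP => p0; apply: pNconst; rewrite /mpoly_const p0 msize0.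
split=> //.
  by rewrite munit_msize; apply/negP => /eqP p1; apply: pNconst; rewrite /mpoly_const p1.
move=> a b eab; have [aC|bC] := pI a b eab.
  left; apply: unit_const aC; apply: contra_neq p0 => a0; by rewrite eab a0 mul0r.
right; apply: unit_const bC; apply: contra_neq p0 => b0; by rewrite eab b0 mulr0.
Qed.

Section Envelope.
Variables (F : finFieldType) (L : closedFieldType) (iota : {rmorphism F -> L}).
Local Notation frob := (qFrobenius (pchar_nat_card iota)).

Lemma defined_over_Fq_frob C :
  defined_over_Fq iota C -> exists k, map_mpoly frob C = k *: C.
Proof.
move=> [D [c [c0 ->]]]; exists (frob c / c).
by rewrite map_mpolyZ map_mpoly_frob_iota scalerA divfK.
Qed.

Lemma irreducible_envelope_defined_over_Fq C C1 :
  defined_over_Fq iota C -> irreducible_envelope iota C C1 -> defined_over_Fq iota C1.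
Proof.
move=> /defined_over_Fq_frob [k eS].
move=> [u [[_ [[_ dCv] _]] [[[C10 _] [C1irr [r eC]]] C1v]]].
have C1P := mpoly_irreducible_prime (rirreducible_mpoly C1irr).
have vfix i : frob (embv iota u i) = embv iota u i by apply: frob_iota.
have [t et] := frob_stable_prime_factor C1P eC eS vfix C1v dCv.
exact: frob_descent C10 et.
Qed.

Lemma defined_over_Fq_component C C1 :
  is_component C1 C -> defined_over_Fq iota C1 ->
  has_Fq_component iota (curve_deg C1) C.
Proof.
move=> [[C10 [deg_gt0 C1hom]] [[C1Nconst C1I] [r eC]]] [D [c [c0 eC1]]].
have eD : map_mpoly iota D = c^-1 *: C1 by rewrite eC1 scalerA mulVf // scale1r.
have sD : msize (map_mpoly iota D) = msize C1 by rewrite eD msizeZ ?invr_eq0.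
have dD : curve_deg (map_mpoly iota D) = curve_deg C1 by rewrite /curve_deg sD.
exists D; split=> //; split; last split.
- split; first by rewrite -msize_poly_eq0 sD msize_poly_eq0.
  by rewrite dD; split=> //; rewrite eD; apply: dhomogZ.
- split; first by rewrite /mpoly_const sD.
  move=> f g efg; have [||gC] := C1I (c *: f) g; last by right.
    by rewrite eC1 efg scalerAl.
  by rewrite /mpoly_const msizeZ // => fC; left.
- by exists (c *: r); rewrite eC eC1 -scalerAl scalerAr.
Qed.

End Envelope.

Theorem lemma2p1 (F : finFieldType) (L : closedFieldType)
  (iota : {rmorphism F -> L}) (Lalg : is_alg_closure iota)
  (K : {set 'rV[F]_3}) (C C1 : {mpoly L[3]}) :
  is_arc K ->
  segre_envelope iota K C ->
  irreducible_envelope iota C C1 ->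
  defined_over_Fq iota C1 /\
  (odd #|F| -> is_complete_arc K -> ~ is_conic iota K -> (3 <= curve_deg C1)%N).
Proof.
move=> _ [_ [Cdef [_ envC]]] envC1.
have C1def := irreducible_envelope_defined_over_Fq Cdef envC1.
split=> // oddF complK nconicK.
have [_ [_ [C1comp _]]] := envC1; have [[_ [deg_gt0 _]] _] := C1comp.
have [[_ incomplete_of_line] [_ conic_of_complete]] := envC oddF.
move: (curve_deg C1) deg_gt0 (defined_over_Fq_component C1comp C1def).
case=> [|[|[|d]]] // _ Fcomp; first by case: (incomplete_of_line Fcomp).
by case: nconicK; apply: conic_of_complete.
Qed.
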